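(* Let $H$ be a cocommutative Hopf algebra over $\mathbb{C}$. The finite-dimensional completely reducible $H$-modules $V$ which admit both a symmetric and a skew-symmetric non-degenerate $H$-invariant bilinear form are exactly the $H$-modules of the form $V\cong W\oplus W^*$ for finite-dimensional $H$-modules $W$.
   Context: A bilinear form $\langle\cdot,\cdot\rangle$ on an $H$-module $V$ is $H$-invariant if $\langle h\cdot v,w\rangle=\langle v,S(h)\cdot w\rangle$ for all $h\in H$, $v,w\in V$, where $S$ is the antipode. $W^*$ is the contragredient module, $(h\cdot f)(w)=f(S(h)\cdot w)$. *)

From HB Require Import structures.
From mathcomp Require Import all_boot all_order all_algebra.
From mathcomp Require Import complex.
From mathcomp Require Import Rstruct.
From Stdlib Require Import Rdefinitions.

Set Implicit Arguments.
Unset Strict Implicit.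
Unset Printing Implicit Defensive.

Import Order.TTheory GRing.Theory Num.Theory.
Local Open Scope ring_scope.

Definition CC : fieldType := (Rdefinitions.R)[i].

(* Tensors over CC.  An element of H (x) H (resp. H (x) H (x) H) is        *)
(* represented by a finite list of pairs (resp. triples) standing for the  *)
(* sum of the corresponding pure tensors.  Two representatives denote the  *)
(* same tensor iff they agree under all products of linear functionals     *)
(* (the canonical map H(x)H -> (H* (x) H* )* is injective over a field).    *)

Definition lfunctional (H : lmodType CC) (f : H -> CC) : Prop :=
  forall (a : CC) (u v : H), f (a *: u + v) = a * f u + f v.

Definition teq2 (H : lmodType CC) (s t : seq (H * H)) : Prop :=
  forall f g : H -> CC, lfunctional f -> lfunctional g ->
    \sum_(p <- s) f p.1 * g p.2 = \sum_(p <- t) f p.1 * g p.2.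

Definition teq3 (H : lmodType CC) (s t : seq (H * H * H)) : Prop :=
  forall f g k : H -> CC, lfunctional f -> lfunctional g -> lfunctional k ->
    \sum_(p <- s) f p.1.1 * g p.1.2 * k p.2 =
    \sum_(p <- t) f p.1.1 * g p.1.2 * k p.2.

Record is_hopf (H : algType CC) (D : H -> seq (H * H)) (eps : H -> CC)
    (S : H -> H) : Prop := IsHopf {
  hopf_D_linear : forall (a : CC) (x y : H),
    teq2 (D (a *: x + y)) ([seq (a *: p.1, p.2) | p <- D x] ++ D y);
  hopf_D_mul : forall x y : H,
    teq2 (D (x * y)) [seq (p.1 * q.1, p.2 * q.2) | p <- D x, q <- D y];
  hopf_D_one : teq2 (D 1) [:: (1, 1)];
  hopf_coassoc : forall x : H,
    teq3 [seq (p.1, q.1, q.2) | p <- D x, q <- D p.2]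
         [seq (q.1, q.2, p.2) | p <- D x, q <- D p.1];
  hopf_eps_linear : forall (a : CC) (x y : H),
    eps (a *: x + y) = a * eps x + eps y;
  hopf_eps_mul : forall x y : H, eps (x * y) = eps x * eps y;
  hopf_eps_one : eps 1 = 1;
  hopf_counit_l : forall x : H, \sum_(p <- D x) eps p.1 *: p.2 = x;
  hopf_counit_r : forall x : H, \sum_(p <- D x) eps p.2 *: p.1 = x;
  hopf_S_linear : forall (a : CC) (x y : H), S (a *: x + y) = a *: S x + S y;
  hopf_antipode_l : forall x : H, \sum_(p <- D x) S p.1 * p.2 = eps x *: 1;
  hopf_antipode_r : forall x : H, \sum_(p <- D x) p.1 * S p.2 = eps x *: 1
}.

Definition cocommutative (H : algType CC) (D : H -> seq (H * H)) : Prop :=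
  forall x : H, teq2 (D x) [seq (p.2, p.1) | p <- D x].

Definition is_hmodule (H : algType CC) (V : vectType CC) (act : H -> 'End(V))
  : Prop :=
  [/\ forall (a : CC) (x y : H), act (a *: x + y) = a *: act x + act y,
      forall x y : H, act (x * y) = (act x \o act y)%VF
    & act 1 = \1%VF].

Definition hstable (H : algType CC) (V : vectType CC) (act : H -> 'End(V))
  (U : {vspace V}) : Prop := forall h : H, (act h @: U <= U)%VS.

Definition completely_reducible (H : algType CC) (V : vectType CC)
  (act : H -> 'End(V)) : Prop :=
  forall U : {vspace V}, hstable act U ->
    exists U' : {vspace V},
      [/\ hstable act U', (U + U')%VS = fullv & (U :&: U')%VS = 0%VS].

Definition bilinear_form (V : vectType CC) (b : V -> V -> CC) : Prop :=
  (forall (a : CC) (u v w : V), b (a *: u + v) w = a * b u w + b v w) /\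
  (forall (a : CC) (u v w : V), b w (a *: u + v) = a * b w u + b w v).

Definition nondegenerate_form (V : vectType CC) (b : V -> V -> CC) : Prop :=
  (forall v : V, (forall w, b v w = 0) -> v = 0) /\
  (forall w : V, (forall v, b v w = 0) -> w = 0).

Definition sym_bilin_form (V : vectType CC) (b : V -> V -> CC) : Prop :=
  forall v w : V, b v w = b w v.

Definition skew_bilin_form (V : vectType CC) (b : V -> V -> CC) : Prop :=
  forall v w : V, b v w = - b w v.

Definition hinvariant (H : algType CC) (S : H -> H) (V : vectType CC)
  (act : H -> 'End(V)) (b : V -> V -> CC) : Prop :=
  forall (h : H) (v w : V), b (act h v) w = b v (act (S h) w).

Definition dual_space (W : vectType CC) : vectType CC := 'Hom(W, CC^o).

Definition dual_act (H : algType CC) (S : H -> H) (W : vectType CC)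
  (act : H -> 'End(W)) (h : H) : 'End(dual_space W) :=
  linfun (fun f : 'Hom(W, CC^o) => (f \o act (S h))%VF).

Definition sum_act (H : algType CC) (V W : vectType CC)
  (actV : H -> 'End(V)) (actW : H -> 'End(W)) (h : H) : 'End((V * W)%type) :=
  linfun (fun p : V * W => (actV h p.1, actW h p.2)).

Definition hmod_iso (H : algType CC) (V V' : vectType CC)
  (act : H -> 'End(V)) (act' : H -> 'End(V')) : Prop :=
  exists phi : 'Hom(V, V'),
    bijective phi /\ forall h : H, (phi \o act h = act' h \o phi)%VF.

(* (<-) On [W (+) W^*] the forms [((w, f), (w', f')) |-> f' w +- f w']
   are non-degenerate, symmetric resp. skew-symmetric, and H-invariant because
   the square of the antipode acts trivially on modules over a cocommutative
   Hopf algebra.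
   (->) Given a symmetric [b1] and a skew-symmetric [b2], the operator [A] with
   [b1 (A v) w = b2 v w] is invertible, H-linear and skew-adjoint for [b1].
   Splitting the spectrum of [A] into two halves exchanged by [z |-> -z] gives
   H-stable subspaces [W1], [W2] with [V = W1 (+) W2], both isotropic for [b1]
   (the kernel of [q(A)] is isotropic when [q] and [q(-X)] are coprime), and
   [v |-> (W1-component of v, b1 v restricted to W1)] is an isomorphism
   [V ~= W1 (+) W1^*]. *)

From HB Require Import structures.
From mathcomp Require Import all_boot all_order all_algebra.
From mathcomp Require Import complex Rstruct ring.
From Stdlib Require Import Classical.

Set Implicit Arguments.
Unset Strict Implicit.
Unset Printing Implicit Defensive.

Import Order.TTheory GRing.Theory Num.Theory.
Local Open Scope ring_scope.

Definition islinear (U X : lmodType CC) (f : U -> X) : Prop :=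
  forall (a : CC) (u v : U), f (a *: u + v) = a *: f u + f v.

Section IsLinear.
Variables (U X : lmodType CC) (f : U -> X).
Hypothesis fL : islinear f.

Let lf : {linear U -> X} := HB.pack f (GRing.isLinear.Build CC U X *:%R f fL).

Lemma islinear0 : f 0 = 0. Proof. exact: (linear0 lf). Qed.
Lemma islinearD u v : f (u + v) = f u + f v. Proof. exact: (linearD lf). Qed.
Lemma islinearZ a u : f (a *: u) = a *: f u. Proof. exact: (linearZZ lf). Qed.
Lemma islinearN u : f (- u) = - f u. Proof. exact: (linearN lf). Qed.
Lemma islinearB u v : f (u - v) = f u - f v. Proof. exact: (linearB lf). Qed.
Lemma islinear_sum I (r : seq I) (P : pred I) (F : I -> U) :
  f (\sum_(i <- r | P i) F i) = \sum_(i <- r | P i) f (F i).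
Proof. exact: (linear_sum lf). Qed.

End IsLinear.

Lemma islinear_lfunE (U X : vectType CC) (f : U -> X) :
  islinear f -> linfun f =1 f.
Proof.
by move=> fL; exact: (lfunE (HB.pack f (GRing.isLinear.Build CC U X *:%R f fL))).
Qed.

Lemma islinear_coord_expand (U : vectType CC) (X : lmodType CC) (M : U -> X) u :
  islinear M ->
  M u = \sum_(i < \dim {:U}) coord (vbasis fullv) i u *: M (vbasis fullv)`_i.
Proof.
move=> ML; rewrite {1}(coord_vbasis (memvf u)) (islinear_sum ML).
by apply: eq_bigr => i _; rewrite (islinearZ ML).
Qed.

Section TensorTransfer.
Variable H : lmodType CC.

Lemma coord_lfunctional (U : vectType CC) (g : H -> U) n (e : n.-tuple U) i :
  islinear g -> lfunctional (fun x => coord e i (g x)).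
Proof. by move=> gL a x y /=; rewrite gL linearP. Qed.

Lemma teq2_bilinear (U1 U2 : vectType CC) (X : lmodType CC) (s t : seq (H * H))
    (al : H -> U1) (be : H -> U2) (M : U1 -> U2 -> X) :
  teq2 s t -> islinear al -> islinear be ->
  (forall w, islinear (M^~ w)) -> (forall u, islinear (M u)) ->
  \sum_(p <- s) M (al p.1) (be p.2) = \sum_(p <- t) M (al p.1) (be p.2).
Proof.
move=> st alL beL ML MR; set e1 := vbasis {:U1}; set e2 := vbasis {:U2}.
have expand r : \sum_(p <- r) M (al p.1) (be p.2) =
    \sum_(i < \dim {:U1}) \sum_(j < \dim {:U2})
      (\sum_(p <- r) coord e1 i (al p.1) * coord e2 j (be p.2)) *: M e1`_i e2`_j.
  under eq_bigr => p _.
    rewrite (islinear_coord_expand _ (ML _)).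
    under eq_bigr => i _ do rewrite (islinear_coord_expand _ (MR _)) scaler_sumr.
    over.
  rewrite exchange_big; apply: eq_bigr => i _; rewrite exchange_big.
  by apply: eq_bigr => j _; rewrite scaler_suml; apply: eq_bigr => p _; rewrite scalerA.
rewrite !expand; apply: eq_bigr => i _; apply: eq_bigr => j _.
by rewrite (st _ _ (coord_lfunctional e1 i alL) (coord_lfunctional e2 j beL)).
Qed.

Lemma teq3_trilinear (U1 U2 U3 : vectType CC) (X : lmodType CC)
    (s t : seq (H * H * H)) (al : H -> U1) (be : H -> U2) (ga : H -> U3)
    (M : U1 -> U2 -> U3 -> X) :
  teq3 s t -> islinear al -> islinear be -> islinear ga ->
  (forall v w, islinear (fun u => M u v w)) ->
  (forall u w, islinear (fun v => M u v w)) ->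
  (forall u v, islinear (M u v)) ->
  \sum_(p <- s) M (al p.1.1) (be p.1.2) (ga p.2) =
  \sum_(p <- t) M (al p.1.1) (be p.1.2) (ga p.2).
Proof.
move=> st alL beL gaL M1 M2 M3.
set e1 := vbasis {:U1}; set e2 := vbasis {:U2}; set e3 := vbasis {:U3}.
have expand r : \sum_(p <- r) M (al p.1.1) (be p.1.2) (ga p.2) =
    \sum_(i < \dim {:U1}) \sum_(j < \dim {:U2}) \sum_(k < \dim {:U3})
      (\sum_(p <- r) coord e1 i (al p.1.1) * coord e2 j (be p.1.2)
                     * coord e3 k (ga p.2)) *: M e1`_i e2`_j e3`_k.
  under eq_bigr => p _.
    rewrite (islinear_coord_expand _ (M1 _ _)).
    under eq_bigr => i _.
      rewrite (islinear_coord_expand _ (M2 _ _)) scaler_sumr.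
      under eq_bigr => j _ do rewrite (islinear_coord_expand _ (M3 _ _)) !scaler_sumr.
      over.
    over.
  rewrite exchange_big; apply: eq_bigr => i _; rewrite exchange_big.
  apply: eq_bigr => j _; rewrite exchange_big; apply: eq_bigr => k _.
  by rewrite scaler_suml; apply: eq_bigr => p _; rewrite !scalerA.
rewrite !expand; apply: eq_bigr => i _; apply: eq_bigr => j _; apply: eq_bigr => k _.
by rewrite (st _ _ _ (coord_lfunctional e1 i alL) (coord_lfunctional e2 j beL)
                     (coord_lfunctional e3 k gaL)).
Qed.

End TensorTransfer.

(** * Hopf algebra identities on a module *)

Section LfunComp.
Variable W : vectType CC.
Implicit Types f g : 'End(W).

Lemma islinear_comp_lfunl g : islinear (fun f => f \o g)%VF.
Proof. by move=> a u v; rewrite comp_lfunDl comp_lfunZl. Qed.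

Lemma islinear_comp_lfunr f : islinear (fun g => f \o g)%VF.
Proof. by move=> a u v; rewrite comp_lfunDr comp_lfunZr. Qed.

Lemma comp_lfun_suml I (r : seq I) (F : I -> 'End(W)) g :
  ((\sum_(i <- r) F i) \o g = \sum_(i <- r) (F i \o g))%VF.
Proof. exact: (islinear_sum (islinear_comp_lfunl g)). Qed.

Lemma comp_lfun_sumr I (r : seq I) (F : I -> 'End(W)) f :
  (f \o (\sum_(i <- r) F i) = \sum_(i <- r) (f \o F i))%VF.
Proof. exact: (islinear_sum (islinear_comp_lfunr f)). Qed.

End LfunComp.

Section AlgebraMaps.
Variables (H : algType CC) (U : lmodType CC) (g : H -> U).
Hypothesis gL : islinear g.

Lemma islinear_compr (f : H -> H) : islinear f -> islinear (fun x => g (f x)).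
Proof. by move=> fL a x y; rewrite fL gL. Qed.

Lemma islinear_mulr c : islinear (fun x => g (x * c)).
Proof. by move=> a x y; rewrite mulrDl -scalerAl gL. Qed.

Lemma islinear_mull c : islinear (fun x => g (c * x)).
Proof. by move=> a x y; rewrite mulrDr -scalerAr gL. Qed.

End AlgebraMaps.

Ltac multilinear :=
  move=> ? ? a f g /=; rewrite ?(comp_lfunDl, comp_lfunDr);
  by do ?[rewrite -comp_lfunZl | rewrite -comp_lfunZr].

Section HopfModule.
Variables (H : algType CC) (D : H -> seq (H * H)) (eps : H -> CC) (S : H -> H).
Hypothesis hopfH : is_hopf D eps S.
Variables (W : vectType CC) (rho : H -> 'End(W)).
Hypothesis rho_hmod : is_hmodule rho.

Lemma rho_linear : islinear rho. Proof. by case: rho_hmod. Qed.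
Lemma rhoM x y : rho (x * y) = (rho x \o rho y)%VF. Proof. by case: rho_hmod. Qed.
Lemma rho1 : rho 1 = \1%VF. Proof. by case: rho_hmod. Qed.

Definition rhoS x := rho (S x).

Lemma rhoS_linear : islinear rhoS.
Proof. by move=> a x y; rewrite /rhoS (hopf_S_linear hopfH) rho_linear. Qed.

Lemma teq2_comp_lfun s t (al be : H -> 'End(W)) :
  teq2 s t -> islinear al -> islinear be ->
  \sum_(p <- s) (al p.1 \o be p.2)%VF = \sum_(p <- t) (al p.1 \o be p.2)%VF.
Proof.
move=> st alL beL.
exact: (teq2_bilinear st alL beL (@islinear_comp_lfunl W) (@islinear_comp_lfunr W)).
Qed.

Definition comul_r x := [seq (p.1, q.1, q.2) | p <- D x, q <- D p.2].
Definition comul_l x := [seq (q.1, q.2, p.2) | p <- D x, q <- D p.1].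

Lemma coassoc_trilinear (U1 U2 U3 : vectType CC) (X : lmodType CC)
    (al : H -> U1) (be : H -> U2) (ga : H -> U3) (M : U1 -> U2 -> U3 -> X) x :
  islinear al -> islinear be -> islinear ga ->
  (forall v w, islinear (fun u => M u v w)) ->
  (forall u w, islinear (fun v => M u v w)) ->
  (forall u v, islinear (M u v)) ->
  \sum_(t <- comul_r x) M (al t.1.1) (be t.1.2) (ga t.2) =
  \sum_(t <- comul_l x) M (al t.1.1) (be t.1.2) (ga t.2).
Proof. exact: teq3_trilinear (hopf_coassoc hopfH x). Qed.

Lemma rho_scalar (c : CC) : rho (c *: 1) = c *: \1%VF.
Proof. by rewrite (islinearZ rho_linear) rho1. Qed.

Lemma sum_antipode_l x : \sum_(p <- D x) (rhoS p.1 \o rho p.2)%VF = eps x *: \1%VF.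
Proof.
have := congr1 rho (hopf_antipode_l hopfH x).
by rewrite (islinear_sum rho_linear) rho_scalar; under eq_bigr do rewrite rhoM.
Qed.

Lemma sum_antipode_r x : \sum_(p <- D x) (rho p.1 \o rhoS p.2)%VF = eps x *: \1%VF.
Proof.
have := congr1 rho (hopf_antipode_r hopfH x).
by rewrite (islinear_sum rho_linear) rho_scalar; under eq_bigr do rewrite rhoM.
Qed.

Lemma rhoS1 : rhoS 1 = \1%VF.
Proof.
have := sum_antipode_l 1.
rewrite (teq2_comp_lfun (hopf_D_one hopfH) rhoS_linear rho_linear) big_seq1 /=.
by rewrite rho1 comp_lfun1r (hopf_eps_one hopfH) scale1r.
Qed.

Lemma sum_antipode_l_mul x y :
  \sum_(p <- D x) \sum_(q <- D y) (rhoS (p.1 * q.1) \o rho (p.2 * q.2))%VF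
  = (eps x * eps y) *: \1%VF.
Proof.
have := sum_antipode_l (x * y); rewrite (hopf_eps_mul hopfH).
by rewrite (teq2_comp_lfun (hopf_D_mul hopfH x y) rhoS_linear rho_linear) big_allpairs_dep.
Qed.

Lemma sum_antipode_r_mul x y :
  \sum_(p <- D x) \sum_(q <- D y) (rho (p.1 * q.1) \o rhoS q.2 \o rhoS p.2)%VF
  = (eps x * eps y) *: \1%VF.
Proof.
transitivity (\sum_(p <- D x)
    (rho p.1 \o (\sum_(q <- D y) (rho q.1 \o rhoS q.2)) \o rhoS p.2)%VF).
  apply: eq_bigr => p _; rewrite comp_lfun_sumr comp_lfun_suml.
  by apply: eq_bigr => q _; rewrite rhoM !comp_lfunA.
rewrite sum_antipode_r; under eq_bigr do rewrite -comp_lfunZr comp_lfun1r -comp_lfunZl.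
by rewrite -scaler_sumr sum_antipode_r scalerA mulrC.
Qed.

(* Both sides of [rhoS_antimul] are convolution inverses of
   [x (x) y |-> rho (x * y)]; summing this term over the iterated coproducts
   interpolates between them. *)
Definition antipode_mul_term (t u : H * H * H) : 'End(W) :=
  (rhoS (t.1.1 * u.1.1) \o (rho (t.1.2 * u.1.2) \o rhoS u.2 \o rhoS t.2))%VF.

Lemma rhoS_mul_expand x y :
  rhoS (x * y) = \sum_(t <- comul_r x) \sum_(u <- comul_r y) antipode_mul_term t u.
Proof.
rewrite -{1}(hopf_counit_r hopfH x) -{1}(hopf_counit_r hopfH y) mulr_suml.
rewrite (islinear_sum rhoS_linear) big_allpairs_dep; apply: eq_bigr => p _.
rewrite mulr_sumr (islinear_sum rhoS_linear).
under [RHS]eq_bigr do rewrite big_allpairs_dep /=.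
rewrite exchange_big /=; apply: eq_bigr => q _.
rewrite -scalerAl -scalerAr !(islinearZ rhoS_linear) scalerA.
rewrite -[rhoS _ in LHS]comp_lfun1r comp_lfunZr -sum_antipode_r_mul comp_lfun_sumr.
by apply: eq_bigr => p' _; rewrite comp_lfun_sumr.
Qed.

Lemma antipode_mul_term_coassoc x y :
  \sum_(t <- comul_r x) \sum_(u <- comul_r y) antipode_mul_term t u =
  \sum_(t <- comul_l x) \sum_(u <- comul_l y) antipode_mul_term t u.
Proof.
transitivity (\sum_(u <- comul_r y) \sum_(t <- comul_l x) antipode_mul_term t u).
  rewrite exchange_big; apply: eq_bigr => u _.
  apply: (coassoc_trilinear (al := fun a => rhoS (a * u.1.1))
    (be := fun b => rho (b * u.1.2)) (ga := rhoS)
    (M := fun a b c => (a \o (b \o rhoS u.2 \o c))%VF));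
    [exact: (islinear_mulr rhoS_linear) | exact: (islinear_mulr rho_linear)
    | exact: rhoS_linear | multilinear ..].
rewrite exchange_big; apply: eq_bigr => t _.
apply: (coassoc_trilinear (al := fun a => rhoS (t.1.1 * a))
  (be := fun b => rho (t.1.2 * b)) (ga := rhoS)
  (M := fun a b c => (a \o (b \o c \o rhoS t.2))%VF));
  [exact: (islinear_mull rhoS_linear) | exact: (islinear_mull rho_linear)
  | exact: rhoS_linear | multilinear ..].
Qed.

Lemma antipode_mul_term_contract x y :
  \sum_(t <- comul_l x) \sum_(u <- comul_l y) antipode_mul_term t u =
  (rhoS y \o rhoS x)%VF.
Proof.
rewrite /comul_l big_allpairs_dep /=.
transitivity (\sum_(p <- D x) \sum_(q <- D y)
   ((\sum_(p' <- D p.1) \sum_(q' <- D q.1) (rhoS (p'.1 * q'.1) \o rho (p'.2 * q'.2)))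
      \o rhoS q.2 \o rhoS p.2)%VF).
  apply: eq_bigr => p _; under eq_bigr do rewrite big_allpairs_dep /=.
  rewrite exchange_big /=; apply: eq_bigr => q _; rewrite !comp_lfun_suml.
  apply: eq_bigr => p' _; rewrite !comp_lfun_suml; apply: eq_bigr => q' _.
  by rewrite /antipode_mul_term /= !comp_lfunA.
under eq_bigr do under eq_bigr do rewrite sum_antipode_l_mul -!comp_lfunZl comp_lfun1l.
rewrite -{2}(hopf_counit_l hopfH x) -{2}(hopf_counit_l hopfH y).
rewrite !(islinear_sum rhoS_linear) comp_lfun_sumr; apply: eq_bigr => p _.
rewrite comp_lfun_suml; apply: eq_bigr => q _.
by rewrite !(islinearZ rhoS_linear) -comp_lfunZl -comp_lfunZr scalerA mulrC.
Qed.

Lemma rhoS_antimul x y : rhoS (x * y) = (rhoS y \o rhoS x)%VF.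
Proof.
by rewrite rhoS_mul_expand antipode_mul_term_coassoc antipode_mul_term_contract.
Qed.

End HopfModule.

Section CocommutativeHopfModule.
Variables (H : algType CC) (D : H -> seq (H * H)) (eps : H -> CC) (S : H -> H).
Hypotheses (hopfH : is_hopf D eps S) (cocomH : cocommutative D).
Variables (W : vectType CC) (rho : H -> 'End(W)).
Hypothesis rho_hmod : is_hmodule rho.

Let rhoS_lin := rhoS_linear hopfH rho_hmod.
Let rhoSS_lin : islinear (fun x => rhoS S rho (S x)).
Proof. exact: (islinear_compr rhoS_lin (hopf_S_linear hopfH)). Qed.

Lemma sum_antipode_SS x :
  \sum_(p <- D x) (rhoS S rho (S p.1) \o rhoS S rho p.2)%VF = eps x *: \1%VF.
Proof.
rewrite (teq2_comp_lfun (cocomH x) rhoSS_lin rhoS_lin) big_map /=.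
under eq_bigr do rewrite -(rhoS_antimul hopfH rho_hmod).
rewrite -(islinear_sum rhoS_lin) (hopf_antipode_r hopfH) (islinearZ rhoS_lin).
by rewrite (rhoS1 hopfH rho_hmod).
Qed.

Lemma rhoSS h : rho (S (S h)) = rho h.
Proof.
rewrite -[h in LHS](hopf_counit_r hopfH) -/(rhoS S rho _) (islinear_sum rhoSS_lin).
transitivity (\sum_(t <- comul_r D h)
    (rhoS S rho (S t.1.1) \o rhoS S rho t.1.2 \o rho t.2)%VF).
  rewrite /comul_r big_allpairs_dep /=; apply: eq_bigr => p _.
  rewrite (islinearZ rhoSS_lin) -{1}[rhoS S rho (S p.1)]comp_lfun1r comp_lfunZr.
  rewrite -(sum_antipode_l hopfH rho_hmod) comp_lfun_sumr.
  by apply: eq_bigr => q _; rewrite comp_lfunA.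
transitivity (\sum_(t <- comul_l D h)
    (rhoS S rho (S t.1.1) \o rhoS S rho t.1.2 \o rho t.2)%VF).
  apply: (coassoc_trilinear hopfH (M := fun a b c => (a \o b \o c)%VF) h rhoSS_lin
    rhoS_lin (rho_linear rho_hmod)); multilinear.
rewrite /comul_l big_allpairs_dep /= -[h in RHS](hopf_counit_l hopfH).
rewrite (islinear_sum (rho_linear rho_hmod)); apply: eq_bigr => p _.
rewrite -comp_lfun_suml sum_antipode_SS -comp_lfunZl comp_lfun1l.
by rewrite (islinearZ (rho_linear rho_hmod)).
Qed.

End CocommutativeHopfModule.

Lemma dual_actE (H : algType CC) (S : H -> H) (W : vectType CC)
    (act : H -> 'End(W)) h f :
  dual_act S act h f = (f \o act (S h))%VF.
Proof. by rewrite islinear_lfunE // => a u v; rewrite comp_lfunDl comp_lfunZl. Qed.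

Lemma sum_actE (H : algType CC) (V W : vectType CC) (actV : H -> 'End(V))
    (actW : H -> 'End(W)) h p :
  sum_act actV actW h p = (actV h p.1, actW h p.2).
Proof. by rewrite islinear_lfunE // => a u v /=; rewrite !linearP. Qed.

Lemma dual_separates (W : vectType CC) (w : W) :
  (forall f : 'Hom(W, CC^o), f w = 0) -> w = 0.
Proof.
move=> wf0; rewrite (coord_vbasis (memvf w)) big1 // => i _.
have := wf0 (linfun (fun x : W => (coord (vbasis fullv) i x : CC^o))).
by rewrite lfunE /= => ->; rewrite scale0r.
Qed.

Section HyperbolicForm.
Variable W : vectType CC.
Implicit Types x y : (W * dual_space W)%type.

Definition hyperbolic_form (sg : CC) x y : CC := y.2 x.1 + sg * x.2 y.1.

Lemma hyperbolic_form_bilinear sg : bilinear_form (hyperbolic_form sg).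
Proof.
have scaleE (a : CC) (c : CC^o) : a *: c = a * c by [].
by split=> a x y z;
  rewrite /hyperbolic_form /= linearP /= add_lfunE scale_lfunE !scaleE; ring.
Qed.

Lemma hyperbolic_form_nondegenerate sg :
  sg != 0 -> nondegenerate_form (hyperbolic_form sg).
Proof.
move=> sg0; split=> -[w f] xf0; congr (_, _).
- apply: dual_separates => g; have := xf0 (0, g).
  by rewrite /hyperbolic_form /= linear0 mulr0 addr0.
- apply/lfunP => u; have /eqP := xf0 (u, 0).
  by rewrite /hyperbolic_form /= !zero_lfunE add0r mulf_eq0 (negPf sg0) => /eqP.
- apply: dual_separates => g; have /eqP := xf0 (0, g).
  by rewrite /hyperbolic_form /= linear0 add0r mulf_eq0 (negPf sg0) => /eqP.
- apply/lfunP => u; have := xf0 (u, 0).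
  by rewrite /hyperbolic_form /= !zero_lfunE mulr0 addr0.
Qed.

Lemma hyperbolic_form_sym : sym_bilin_form (hyperbolic_form 1).
Proof. by move=> x y; rewrite /hyperbolic_form !mul1r addrC. Qed.

Lemma hyperbolic_form_skew : skew_bilin_form (hyperbolic_form (-1)).
Proof. by move=> x y; rewrite /hyperbolic_form !mulN1r opprD opprK addrC. Qed.

End HyperbolicForm.

Lemma hyperbolic_form_invariant (H : algType CC) (D : H -> seq (H * H))
    (eps : H -> CC) (S : H -> H) (W : vectType CC) (rho : H -> 'End(W)) sg :
  is_hopf D eps S -> cocommutative D -> is_hmodule rho ->
  hinvariant S (sum_act rho (dual_act S rho)) (hyperbolic_form sg).
Proof.
move=> hopfH cocomH rho_hmod h x y.
by rewrite /hyperbolic_form !sum_actE !dual_actE /= !comp_lfunE (rhoSS hopfH cocomH).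
Qed.

Section PullbackForm.
Variables (V V' : vectType CC) (phi : 'Hom(V, V')) (b : V' -> V' -> CC).

Definition pullback_form (v w : V) : CC := b (phi v) (phi w).

Lemma pullback_bilinear : bilinear_form b -> bilinear_form pullback_form.
Proof. by case=> bl br; split=> a u v w; rewrite /pullback_form linearP ?bl ?br. Qed.

Lemma pullback_nondegenerate :
  bijective phi -> nondegenerate_form b -> nondegenerate_form pullback_form.
Proof.
case=> psi phiK psiK [ndl ndr]; split=> v vb0; rewrite -[v]phiK -[RHS]phiK linear0.
  by rewrite (ndl (phi v)) // => y; rewrite -[y]psiK; exact: vb0.
by rewrite (ndr (phi v)) // => y; rewrite -[y]psiK; exact: vb0.
Qed.

Lemma pullback_invariant (H : algType CC) (S : H -> H) (act : H -> 'End(V))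
    (act' : H -> 'End(V')) :
  (forall h, phi \o act h = act' h \o phi)%VF ->
  hinvariant S act' b -> hinvariant S act pullback_form.
Proof.
move=> phiI binv h v w; rewrite /pullback_form.
by rewrite -!comp_lfunE !phiI !comp_lfunE binv.
Qed.

End PullbackForm.

Definition has_invariant_form (H : algType CC) (S : H -> H) (V : vectType CC)
    (act : H -> 'End(V)) (P : (V -> V -> CC) -> Prop) : Prop :=
  exists b : V -> V -> CC,
    [/\ bilinear_form b, nondegenerate_form b, P b & hinvariant S act b].

Lemma invariant_forms_of_sum_dual (H : algType CC) (D : H -> seq (H * H))
    (eps : H -> CC) (S : H -> H) (V W : vectType CC) (act : H -> 'End(V))
    (actW : H -> 'End(W)) :
  is_hopf D eps S -> cocommutative D -> is_hmodule actW ->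
  hmod_iso act (sum_act actW (dual_act S actW)) ->
  has_invariant_form S act (@sym_bilin_form V) /\
  has_invariant_form S act (@skew_bilin_form V).
Proof.
move=> hopfH cocomH actW_hmod [phi [phi_bij phiI]].
have inv sg := pullback_invariant phiI (hyperbolic_form_invariant sg hopfH cocomH actW_hmod).
split.
- exists (pullback_form phi (hyperbolic_form 1)); split=> //.
  + exact/pullback_bilinear/hyperbolic_form_bilinear.
  + exact/pullback_nondegenerate/hyperbolic_form_nondegenerate/oner_neq0.
  + by move=> v w; exact: hyperbolic_form_sym.
- exists (pullback_form phi (hyperbolic_form (-1))); split=> //.
  + exact/pullback_bilinear/hyperbolic_form_bilinear.
  + by apply/pullback_nondegenerate/hyperbolic_form_nondegenerate; rewrite ?oppr_eq0 ?oner_neq0.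
  + by move=> v w; exact: hyperbolic_form_skew.
Qed.

(** * Polynomials in an endomorphism *)

Section HornerLfun.
Variables (V : vectType CC) (A : 'End(V)).

Definition lfun_pow n := iter n (comp_lfun A) \1%VF.

Definition horner_lfun (p : {poly CC}) : 'End(V) :=
  \sum_(i < size p) p`_i *: lfun_pow i.

Lemma horner_lfun_widen (p : {poly CC}) n :
  (size p <= n)%N -> horner_lfun p = \sum_(i < n) p`_i *: lfun_pow i.
Proof.
move=> le_p_n; rewrite /horner_lfun.
rewrite (big_ord_widen n (fun i => p`_i *: lfun_pow i) le_p_n) big_mkcond /=.
apply: eq_bigr => i _; case: ifP => // /negbT; rewrite -leqNgt => le_p_i.
by rewrite nth_default // scale0r.
Qed.

Lemma horner_lfun_linear : islinear horner_lfun.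
Proof.
move=> a p q; set n := maxn (size p) (size q).
have le_n : (size (a *: p + q)%R <= n)%N.
  rewrite (leq_trans (size_polyD _ _)) // geq_max leq_maxr andbT.
  exact: leq_trans (size_scale_leq _ _) (leq_maxl _ _).
rewrite !(@horner_lfun_widen _ n) ?leq_maxl ?leq_maxr // scaler_sumr -big_split.
by apply: eq_bigr => i _; rewrite coefD coefZ scalerDl scalerA.
Qed.

Lemma horner_lfunC c : horner_lfun c%:P = c *: \1%VF.
Proof. by rewrite (@horner_lfun_widen _ 1) ?size_polyC ?leq_b1 // big_ord1 coefC. Qed.

Lemma horner_lfun1 : horner_lfun 1 = \1%VF.
Proof. by rewrite horner_lfunC scale1r. Qed.

Lemma horner_lfunXM (p : {poly CC}) : horner_lfun ('X * p) = (A \o horner_lfun p)%VF.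
Proof.
rewrite (@horner_lfun_widen _ (size p).+1); last first.
  by have [->|p0] := eqVneq p 0; rewrite ?mulr0 ?size_poly0 // mulrC size_mulX.
rewrite big_ord_recl coefXM eqxx scale0r add0r comp_lfun_sumr.
by apply: eq_bigr => i _; rewrite coefXM -comp_lfunZr.
Qed.

Lemma horner_lfunX : horner_lfun 'X = A.
Proof. by rewrite -['X]mulr1 horner_lfunXM horner_lfun1 comp_lfun1r. Qed.

Lemma horner_lfunM (p q : {poly CC}) :
  horner_lfun (p * q) = (horner_lfun p \o horner_lfun q)%VF.
Proof.
elim/poly_ind: p => [|p c IHp].
  by rewrite mul0r (islinear0 horner_lfun_linear) comp_lfun0l.
rewrite mulrDl [p * 'X]mulrC -mulrA mul_polyC.
rewrite !(islinearD horner_lfun_linear) (islinearZ horner_lfun_linear).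
rewrite !horner_lfunXM IHp horner_lfunC comp_lfunDl comp_lfunA -comp_lfunZl.
by rewrite comp_lfun1l.
Qed.

Lemma horner_lfun_comm (B : 'End(V)) (p : {poly CC}) :
  (B \o A = A \o B)%VF -> (B \o horner_lfun p = horner_lfun p \o B)%VF.
Proof.
move=> BA; elim/poly_ind: p => [|p c IHp].
  by rewrite (islinear0 horner_lfun_linear) comp_lfun0l comp_lfun0r.
rewrite (islinearD horner_lfun_linear) mulrC horner_lfunXM horner_lfunC.
rewrite comp_lfunDl comp_lfunDr -comp_lfunZr -comp_lfunZl comp_lfun1l comp_lfun1r.
by rewrite comp_lfunA BA -!comp_lfunA IHp.
Qed.

Lemma horner_lfun_commA (p : {poly CC}) : (A \o horner_lfun p = horner_lfun p \o A)%VF.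
Proof. exact: horner_lfun_comm. Qed.

Lemma horner_lfun_annihilator : exists2 p : {poly CC}, p != 0 & horner_lfun p = 0.
Proof.
set n := dim 'End(V); pose X := [tuple lfun_pow i | i < n.+1].
have dependent : ~~ free X.
  apply/negP; rewrite /free size_tuple => /eqP dimX.
  by have := dimvS (subvf <<X>>%VS); rewrite dimX dimvf ltnn.
have [k k_rel [i k_i]] : exists2 k : 'I_n.+1 -> CC,
    \sum_(i < n.+1) k i *: X`_i = 0 & exists i, k i != 0.
  apply: NNPP => no_rel; case/negP: dependent; apply/freeP => k k_rel i.
  by apply/eqP; apply: contra_notT no_rel => k_i; exists k => //; exists i.
exists (\poly_(j < n.+1) k (inord j)).
  apply: contraNneq k_i => /(congr1 (fun p : {poly CC} => p`_i)).
  by rewrite coef_poly ltn_ord inord_val coef0 => ->.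
rewrite (@horner_lfun_widen _ n.+1) ?size_poly // -[RHS]k_rel.
by apply: eq_bigr => j _; rewrite coef_poly ltn_ord inord_val nth_mktuple.
Qed.

End HornerLfun.

Definition positive_half (z : CC) : bool :=
  if complex.Re z == 0 then 0 < complex.Im z else 0 < complex.Re z.

Lemma positive_half0 : ~~ positive_half 0.
Proof. by rewrite /positive_half /= eqxx ltxx. Qed.

Lemma positive_halfN z : positive_half z -> ~~ positive_half (- z).
Proof.
case: z => a b; rewrite /positive_half /= oppr_eq0 !oppr_gt0.
by case: eqP => _ z_pos; rewrite -leNgt ltW.
Qed.

Lemma positive_half_or z : z != 0 -> positive_half z || positive_half (- z).
Proof.
case: z => a b nz; rewrite /positive_half /= oppr_eq0 !oppr_gt0.
case: eqP => [a0|/eqP a_nz]; rewrite orbC -neq_lt //.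
by apply: contraNneq nz => b0; rewrite a0 b0.
Qed.

Definition roots_prod (rs : seq CC) (P : pred CC) : {poly CC} :=
  \prod_(z <- rs | P z) ('X - z%:P).

Lemma root_roots_prod rs P x : root (roots_prod rs P) x = (x \in rs) && P x.
Proof. by rewrite /roots_prod -big_filter root_prod_XsubC mem_filter andbC. Qed.

Lemma coprimep_roots_prod rs (P : pred CC) (q : {poly CC}) :
  (forall x, P x -> ~~ root q x) -> coprimep (roots_prod rs P) q.
Proof.
move=> Pq; apply: Pdiv.ClosedField.root_coprimep => x.
by rewrite root_roots_prod => /andP[_ /Pq].
Qed.

Lemma prod_XsubC_halves rs :
  \prod_(z <- rs) ('X - z%:P) = roots_prod rs positive_half *
    (roots_prod rs (fun z => positive_half (- z)) * roots_prod rs (pred1 0)).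
Proof.
rewrite (bigID positive_half) /=; congr (_ * _).
rewrite (bigID (fun z => positive_half (- z))) /=; congr (_ * _).
  apply: eq_bigl => z; case pos_Nz: (positive_half (- z)); rewrite ?andbF ?andbT //.
  by have := positive_halfN pos_Nz; rewrite opprK.
apply: eq_bigl => z; have [->|z_nz] := eqVneq z 0.
  by rewrite oppr0 (negPf positive_half0) /= eqxx.
have := positive_half_or z_nz; rewrite /= (negPf z_nz).
by case: (positive_half z); case: (positive_half (- z)).
Qed.

Section SpectralSplit.
Variables (V : vectType CC) (A : 'End(V)).
Hypothesis A_inj : injective A.

Lemma horner_lfun_prod_inj (s : seq CC) :
  (forall z, z \in s -> injective (A - z *: \1)%VF) ->
  injective (horner_lfun A (\prod_(z <- s) ('X - z%:P))).
Proof.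
elim: s => [|z s IHs] s_inj.
  by rewrite big_nil horner_lfun1 => u v; rewrite !id_lfunE.
rewrite big_cons horner_lfunM (islinearB (horner_lfun_linear A)) horner_lfunX.
move=> u v; rewrite horner_lfunC !comp_lfunE => /(s_inj z (mem_head _ _)).
by apply: IHs => y ys; apply: s_inj; rewrite in_cons ys orbT.
Qed.

(* Split the roots of an annihilating polynomial into the two halves exchanged
   by [z |-> -z]; the root [0] can be dropped because [A] is injective. *)
Lemma spectral_split : exists q1 q2 : {poly CC},
  [/\ horner_lfun A (q1 * q2) = 0, coprimep q1 q2,
      coprimep q1 (q1 \Po - 'X) & coprimep q2 (q2 \Po - 'X)].
Proof.
have [p p_nz pA0] := horner_lfun_annihilator A.
have [rs p_split] := closed_field_poly_normal p.
have root_comp (q : {poly CC}) x : root (q \Po - 'X) x = root q (- x).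
  by rewrite !rootE horner_comp hornerN hornerX.
exists (roots_prod rs positive_half), (roots_prod rs (fun z => positive_half (- z))).
split.
- have q0_inj : injective (horner_lfun A (roots_prod rs (pred1 0))).
    rewrite /roots_prod -big_filter; apply: horner_lfun_prod_inj => z.
    by rewrite mem_filter => /andP[/eqP -> _]; rewrite scale0r subr0.
  apply/lfunP => v; rewrite zero_lfunE; apply: q0_inj; rewrite linear0.
  move: pA0; rewrite {1}p_split (islinearZ (horner_lfun_linear A)) prod_XsubC_halves.
  move/eqP; rewrite scaler_eq0 lead_coef_eq0 (negPf p_nz) /= mulrA mulrC.
  by move=> /eqP/lfunP/(_ v); rewrite zero_lfunE !horner_lfunM !comp_lfunE.
- apply: coprimep_roots_prod => x /positive_halfN /negPf Nx_neg.
  by rewrite root_roots_prod Nx_neg andbF.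
- apply: coprimep_roots_prod => x /positive_halfN /negPf Nx_neg.
  by rewrite root_comp root_roots_prod Nx_neg andbF.
- apply: coprimep_roots_prod => x /positive_halfN; rewrite opprK => /negPf x_neg.
  by rewrite root_comp root_roots_prod opprK x_neg andbF.
Qed.

End SpectralSplit.

(** * Isotropic splitting *)

Lemma lker0_limg_full (aT rT : vectType CC) (f : 'Hom(aT, rT)) :
  lker f == 0%VS -> dim aT = dim rT -> limg f = fullv.
Proof.
move=> f_inj dimE; apply/eqP; rewrite eqEdim subvf limg_dim_eq; last first.
  by rewrite (eqP f_inj) capv0.
by rewrite /= !dimvf dimE leqnn.
Qed.

Lemma lker0_bijective (aT rT : vectType CC) (f : 'Hom(aT, rT)) :
  lker f == 0%VS -> dim aT = dim rT -> bijective f.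
Proof.
move=> f_inj dimE; exists f^-1%VF; first exact: lker0_lfunK.
by move=> y; rewrite limg_lfunVK // lker0_limg_full ?memvf.
Qed.

Section SubModule.
Variables (H : algType CC) (V : vectType CC) (act : H -> 'End(V)) (U : {vspace V}).
Hypotheses (act_hmod : is_hmodule act) (U_stable : hstable act U).

Definition subact h : 'End(subvs_of U) :=
  linfun (fun w => vsproj U (act h (vsval w))).

Lemma subactE h w : vsval (subact h w) = act h (vsval w).
Proof.
rewrite /subact islinear_lfunE => [|a x y]; last by rewrite !linearP.
by rewrite vsprojK // (subvP (U_stable h)) // memv_img ?subvsP.
Qed.

Lemma subact_hmodule : is_hmodule subact.
Proof.
case: act_hmod => actL actM act1; split.
- move=> a x y; apply/lfunP => w; apply: subvs_inj.
  by rewrite add_lfunE scale_lfunE linearP /= !subactE actL add_lfunE scale_lfunE.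
- by move=> x y; apply/lfunP => w; apply: subvs_inj; rewrite comp_lfunE !subactE actM comp_lfunE.
- by apply/lfunP => w; apply: subvs_inj; rewrite subactE act1 !id_lfunE.
Qed.

End SubModule.

Lemma lker_hstable (H : algType CC) (V : vectType CC) (act : H -> 'End(V))
    (f : 'End(V)) :
  (forall h, f \o act h = act h \o f)%VF -> hstable act (lker f).
Proof.
move=> f_comm h; apply/subvP => u /memv_imgP[v]; rewrite memv_ker => /eqP fv0 ->.
by rewrite memv_ker -comp_lfunE f_comm comp_lfunE fv0 linear0.
Qed.

Section FormLfun.
Variables (V : vectType CC) (b : V -> V -> CC).
Hypothesis b_bil : bilinear_form b.

Lemma form_linearl w : islinear (fun u => b u w : CC^o).
Proof. by case: b_bil => bl _ a u v; exact: bl. Qed.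

Lemma form_linearr u : islinear (fun w => b u w : CC^o).
Proof. by case: b_bil => _ br a v w; exact: br. Qed.

Definition form_lfun (U : {vspace V}) : 'Hom(V, 'Hom(subvs_of U, CC^o)) :=
  linfun (fun v => linfun (fun w : subvs_of U => (b v (vsval w) : CC^o))).

Lemma form_lfunE U v w : form_lfun U v w = b v (vsval w).
Proof.
have lin_w v' : islinear (fun w : subvs_of U => (b v' (vsval w) : CC^o)).
  by move=> a x y; rewrite linearP; exact: form_linearr.
rewrite /form_lfun islinear_lfunE ?islinear_lfunE // => a x y.
by apply/lfunP => w'; rewrite add_lfunE scale_lfunE !islinear_lfunE //; exact: form_linearl.
Qed.

Hypothesis b_nd : nondegenerate_form b.

Lemma lker_form_lfun : lker (form_lfun fullv) == 0%VS.
Proof.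
apply/lker0P => u v /lfunP uv; apply/eqP; rewrite -subr_eq0; apply/eqP.
apply: b_nd.1 => w; have := uv (vsproj fullv w).
by rewrite !form_lfunE vsprojK ?memvf // (islinearB (form_linearl w)) => ->; rewrite subrr.
Qed.

(* A complement [X] of an isotropic subspace [Y] embeds [Y] into the dual of [X]. *)
Lemma isotropic_dim_le (X Y : {vspace V}) :
  (forall u, exists2 x, x \in X & u - x \in Y) ->
  {in Y &, forall y y', b y y' = 0} -> (\dim Y <= \dim X)%N.
Proof.
move=> decomp Y_iso.
have Y_ker : (Y :&: lker (form_lfun X))%VS = 0%VS.
  apply/eqP; rewrite -subv0; apply/subvP => y /memv_capP[yY]; rewrite memv_ker memv0.
  move=> /eqP/lfunP y0; apply/eqP/b_nd.1 => u; have [x xX ux] := decomp u.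
  rewrite -[u](subrK x) (islinearD (form_linearr y)) Y_iso // add0r.
  by have := y0 (vsproj X x); rewrite form_lfunE zero_lfunE vsprojK.
by have := dimvS (subvf (form_lfun X @: Y)%VS); rewrite limg_dim_eq // dimvf /dim /= muln1.
Qed.

End FormLfun.

HB.lock Definition form_ratio (V : vectType CC) (b1 b2 : V -> V -> CC) : 'End(V) :=
  ((form_lfun b1 fullv)^-1 \o form_lfun b2 fullv)%VF.

Lemma form_ratioE (V : vectType CC) (b1 b2 : V -> V -> CC) v w :
  bilinear_form b1 -> nondegenerate_form b1 -> bilinear_form b2 ->
  b1 (form_ratio b1 b2 v) w = b2 v w.
Proof.
move=> b1_bil b1_nd b2_bil; rewrite -[w](vsprojK (memvf w)) -!form_lfunE //.
rewrite form_ratio.unlock comp_lfunE limg_lfunVK // lker0_limg_full ?memvf ?lker_form_lfun //.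
by rewrite /dim /= muln1; exact/esym/dimvf.
Qed.

Section IsotropicSplitting.
Variables (H : algType CC) (S : H -> H) (V : vectType CC) (act : H -> 'End(V)).
Hypothesis act_hmod : is_hmodule act.
Variables (b1 b2 : V -> V -> CC).
Hypotheses (b1_bil : bilinear_form b1) (b1_nd : nondegenerate_form b1)
  (b1_sym : sym_bilin_form b1) (b1_inv : hinvariant S act b1).
Hypotheses (b2_bil : bilinear_form b2) (b2_nd : nondegenerate_form b2)
  (b2_skew : skew_bilin_form b2) (b2_inv : hinvariant S act b2).

Local Notation A := (form_ratio b1 b2).
Local Notation qA := (horner_lfun A).

Let AE v w : b1 (A v) w = b2 v w. Proof. exact: form_ratioE. Qed.
Let b1l w := form_linearl b1_bil w.
Let b1r v := form_linearr b1_bil v.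

Lemma form_ratio_comm h : (A \o act h = act h \o A)%VF.
Proof.
apply/lfunP => v; rewrite !comp_lfunE; apply/eqP; rewrite -subr_eq0; apply/eqP.
by apply: b1_nd.1 => w; rewrite (islinearB (b1l w)) AE b2_inv b1_inv AE subrr.
Qed.

Lemma form_ratio_skew v w : b1 v (A w) = - b1 (A v) w.
Proof. by rewrite b1_sym !AE b2_skew. Qed.

Lemma form_ratio_inj : injective A.
Proof.
move=> u v Auv; apply/eqP; rewrite -subr_eq0; apply/eqP; apply: b2_nd.1 => w.
by rewrite (islinearB (form_linearl b2_bil w)) -!AE Auv subrr.
Qed.

Lemma horner_form_ratio_adjoint r v w : b1 v (qA r w) = b1 (qA (r \Po - 'X) v) w.
Proof.
elim/poly_ind: r v w => [|r c IHr] v w.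
  rewrite comp_poly0 (islinear0 (horner_lfun_linear A)) !zero_lfunE.
  by rewrite (islinear0 (b1r v)) (islinear0 (b1l w)).
rewrite comp_polyD comp_polyM comp_polyX comp_polyC mulrN [r * 'X]mulrC [_ * 'X]mulrC.
rewrite !(islinearD (horner_lfun_linear A)) (islinearN (horner_lfun_linear A)).
rewrite !horner_lfunXM !horner_lfunC !add_lfunE opp_lfunE !scale_lfunE !id_lfunE.
rewrite !comp_lfunE (islinearD (b1r v)) (islinearD (b1l w)) (islinearN (b1l w)).
rewrite (islinearZ (b1r v)) (islinearZ (b1l w)) form_ratio_skew IHr.
congr (- b1 _ w + _); apply/esym.
by have /lfunP/(_ v) := horner_lfun_commA A (r \Po - 'X); rewrite !comp_lfunE.
Qed.

(* From Bezout [u1 q + u2 (q \Po -X) = 1]: the first term kills [w], and the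
   second is adjoint to [(u2 \Po -X) q], which kills [v]. *)
Lemma isotropic_lker_horner q :
  coprimep q (q \Po - 'X) -> {in lker (qA q) &, forall v w, b1 v w = 0}.
Proof.
case/Bezout_eq1_coprimepP=> -[u1 u2] /= bezout v w.
rewrite !memv_ker => /eqP qv0 /eqP qw0.
have -> : w = qA (u1 * q + u2 * (q \Po - 'X)) w by rewrite bezout horner_lfun1 id_lfunE.
rewrite (islinearD (horner_lfun_linear A)) add_lfunE (islinearD (b1r v)).
rewrite horner_lfunM comp_lfunE qw0 linear0 (islinear0 (b1r v)) add0r.
have NN : (- 'X) \Po (- 'X) = 'X :> {poly CC}.
  by rewrite -[- 'X]sub0r comp_polyB comp_poly0 comp_polyX !sub0r opprK.
rewrite horner_form_ratio_adjoint comp_polyM -comp_polyA NN comp_polyXr.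
by rewrite horner_lfunM comp_lfunE qv0 linear0 (islinear0 (b1l w)).
Qed.

Section Splitting.
Variables (q1 q2 u1 u2 : {poly CC}).
Hypotheses (q12A : qA (q1 * q2) = 0) (bezout : u1 * q1 + u2 * q2 = 1).
Hypotheses (q1_iso : coprimep q1 (q1 \Po - 'X)) (q2_iso : coprimep q2 (q2 \Po - 'X)).

Local Notation E := (qA (u2 * q2)).
Local Notation F := (qA (u1 * q1)).
Local Notation W1 := (lker (qA q1)).
Local Notation W2 := (lker (qA q2)).

Lemma proj_sum v : E v + F v = v.
Proof.
by rewrite -add_lfunE -(islinearD (horner_lfun_linear A)) addrC bezout horner_lfun1 id_lfunE.
Qed.

Lemma proj1_mem v : E v \in W1.
Proof.
rewrite memv_ker -comp_lfunE -horner_lfunM mulrCA.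
by rewrite horner_lfunM q12A comp_lfun0r zero_lfunE.
Qed.

Lemma proj2_mem v : F v \in W2.
Proof.
rewrite memv_ker -comp_lfunE -horner_lfunM mulrCA [q2 * q1]mulrC.
by rewrite horner_lfunM q12A comp_lfun0r zero_lfunE.
Qed.

Lemma dim_W1_W2 : \dim W1 = \dim W2.
Proof.
apply/eqP; rewrite eqn_leq; apply/andP; split.
  apply: (isotropic_dim_le b1_bil b1_nd _ (isotropic_lker_horner q1_iso)).
  by move=> u; exists (F u); rewrite ?proj2_mem // -{1}(proj_sum u) addrK proj1_mem.
apply: (isotropic_dim_le b1_bil b1_nd _ (isotropic_lker_horner q2_iso)).
by move=> u; exists (E u); rewrite ?proj1_mem // -{1}(proj_sum u) addrAC subrr add0r proj2_mem.
Qed.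

Lemma dim_W1_W2_sum : (\dim W1 + \dim W2)%N = dim V.
Proof.
rewrite -dimv_sum_cap.
have -> : (W1 + W2)%VS = fullv.
  apply/eqP; rewrite eqEsubv subvf; apply/subvP => u _; rewrite -(proj_sum u).
  by rewrite memv_add ?proj1_mem ?proj2_mem.
have -> : (W1 :&: W2)%VS = 0%VS.
  apply/eqP; rewrite -subv0; apply/subvP => v /memv_capP[q1v q2v].
  rewrite memv_ker in q1v; rewrite memv_ker in q2v.
  rewrite memv0 -(proj_sum v) !horner_lfunM !comp_lfunE.
  by rewrite (eqP q1v) (eqP q2v) !linear0 addr0.
by rewrite dimv0 addn0 dimvf.
Qed.

Lemma horner_form_ratio_comm p h : (qA p \o act h = act h \o qA p)%VF.
Proof. exact/esym/horner_lfun_comm/esym/form_ratio_comm. Qed.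

Lemma W1_hstable : hstable act W1.
Proof. exact/lker_hstable/horner_form_ratio_comm. Qed.

Local Notation actW1 := (subact act W1).

Definition split_iso : 'Hom(V, (subvs_of W1 * dual_space (subvs_of W1))%type) :=
  linfun (fun v => (vsproj W1 (E v), form_lfun b1 W1 v)).

Lemma split_isoE v : split_iso v = (vsproj W1 (E v), form_lfun b1 W1 v).
Proof. by rewrite islinear_lfunE // => a x y; rewrite !linearP. Qed.

Lemma split_iso_comm h :
  (split_iso \o act h = sum_act actW1 (dual_act S actW1) h \o split_iso)%VF.
Proof.
apply/lfunP => v; rewrite !comp_lfunE sum_actE dual_actE !split_isoE /=; congr (_, _).
  apply: subvs_inj; rewrite (subactE W1_hstable) !vsprojK ?proj1_mem //.
  by rewrite -comp_lfunE horner_form_ratio_comm comp_lfunE.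
by apply/lfunP => w; rewrite comp_lfunE !form_lfunE // (subactE W1_hstable) b1_inv.
Qed.

(* [v] with [E v = 0] lies in [W2]; if moreover [b1 v] vanishes on [W1], it is
   orthogonal to [W1 + W2] since [W2] is isotropic. *)
Lemma lker_split_iso : lker split_iso == 0%VS.
Proof.
rewrite -subv0; apply/subvP => v; rewrite memv_ker memv0 split_isoE.
move=> /eqP[Ev0 b1v0]; apply/eqP.
have {}Ev0 : E v = 0 by rewrite -(vsprojK (proj1_mem v)) Ev0 linear0.
have vW2 : v \in W2 by rewrite -(proj_sum v) Ev0 add0r proj2_mem.
apply: b1_nd.1 => u; rewrite -(proj_sum u) (islinearD (b1r v)).
rewrite (isotropic_lker_horner q2_iso vW2 (proj2_mem u)) addr0.
have /lfunP/(_ (vsproj W1 (E u))) := b1v0.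
by rewrite form_lfunE // vsprojK ?proj1_mem // zero_lfunE.
Qed.

Lemma split_iso_bij : bijective split_iso.
Proof.
apply: lker0_bijective lker_split_iso _.
have -> : dim (subvs_of W1 * dual_space (subvs_of W1))%type = (\dim W1 + \dim W1 * 1)%N.
  by [].
by rewrite muln1 -dim_W1_W2_sum dim_W1_W2.
Qed.

End Splitting.

Lemma sum_dual_of_invariant_forms :
  exists (W : vectType CC) (actW : H -> 'End(W)),
    is_hmodule actW /\ hmod_iso act (sum_act actW (dual_act S actW)).
Proof.
have [q1 [q2 [q12A q12 q1_iso q2_iso]]] := spectral_split form_ratio_inj.
have [[u1 u2] /= bezout] := Bezout_eq1_coprimepP _ _ q12.
exists (subvs_of (lker (qA q1))), (subact act (lker (qA q1))); split.
  exact: subact_hmodule (W1_hstable q1).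
exists (split_iso q1 q2 u2); split; first exact: split_iso_bij q12A bezout q1_iso q2_iso.
exact: split_iso_comm q12A.
Qed.

End IsotropicSplitting.

Theorem mainTheorem10 (H : algType CC) (D : H -> seq (H * H)) (eps : H -> CC)
    (S : H -> H) :
  is_hopf D eps S -> cocommutative D ->
  forall (V : vectType CC) (act : H -> 'End(V)),
    is_hmodule act -> completely_reducible act ->
    ((exists b : V -> V -> CC,
        [/\ bilinear_form b, nondegenerate_form b, sym_bilin_form b
          & hinvariant S act b]) /\
     (exists b : V -> V -> CC,
        [/\ bilinear_form b, nondegenerate_form b, skew_bilin_form b
          & hinvariant S act b]))
    <->
    (exists (W : vectType CC) (actW : H -> 'End(W)),
        is_hmodule actW /\
        hmod_iso act (sum_act actW (dual_act S actW))).
Proof.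
move=> hopfH cocomH V act act_hmod _; split.
  case=> -[b1 [b1_bil b1_nd b1_sym b1_inv]] [b2 [b2_bil b2_nd b2_skew b2_inv]].
  exact: (sum_dual_of_invariant_forms act_hmod b1_bil b1_nd b1_sym b1_inv b2_bil b2_nd b2_skew b2_inv).
case=> W [actW [actW_hmod iso]].
exact: (invariant_forms_of_sum_dual hopfH cocomH actW_hmod iso).
Qed.
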